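(* Let $(\Phi,\mathtt{Prg},\mathrm{AT})$ be a CLC SPL with feature model $\Phi=(\mathcal F,\phi)$, and let $p\subseteq\mathcal F$ be a valid product, i.e. $p\models\phi$. If $\phi\vdash \mathtt{Prg}\ \textsc{ok}$ (family-based typing), then $\vdash [\![\mathtt{Prg}]\!]_p\ \textsc{ok}$ (LC typing), i.e. the variant identified by $p$ is a well-typed LC program.
   Context: **Lightweight C (LC).** Types: $T ::= \mathtt{int}\mid \mathtt{void}* \mid \mathtt{struct}\ s*$ ($s$ a struct name). Expressions: $e ::= n$ (integer literal) $\mid \mathtt{NULL}\mid x$ (parameter name) $\mid f(e_1,\dots,e_k)$ ($k\ge0$) $\mid e\texttt{->}m \mid e\texttt{->}m=e \mid e\,?\,e:e \mid (e_1,\dots,e_k)$ ($k\ge1$, a parenthesized expression sequence) $\mid \mathsf{uop}\ e\mid e\ \mathsf{bop}\ e\mid \mathtt{MALLOC}(\mathtt{struct}\ s)\mid \mathtt{MFREE}(e)$. A struct definition is $\mathtt{struct}\ s\{T_1\,m_1;\dots;T_k\,m_k;\};$ (distinct member names); a function definition is $T_0\ f(T_1\,x_1,\dots,T_k\,x_k)\{\mathtt{return}\ e;\}$ (distinct parameter names); a program $\mathtt{Prg}=\overline{SD}\ \overline{FD}$ is a sequence of struct definitions followed by a sequence of function definitions, with distinct struct names and distinct function names. $\mathtt{Prg}$ is regarded as a finite map: $\mathtt{Prg}(s)$ is the definition of struct $s$, $\mathtt{Prg}(s)(m)=$ ''$T\ m$'' is the declaration of member $m$ in it, $\mathtt{Prg}(f)$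 is the definition of function $f$; $\mathrm{dom}(\overline{SD})$ is the set of defined struct names and $\mathrm{dom}(\mathtt{Prg})$ the set of defined struct and function names. $\mathtt{Prg}$ is *sane* if (1) every struct name occurring anywhere in $\mathtt{Prg}$ is defined in $\mathtt{Prg}$, (2) every function name occurring in the function definitions is defined in $\mathtt{Prg}$, (3) $\mathtt{Prg}(\mathtt{main})=\mathtt{int\ main}()\{\mathtt{return}\ e;\}$ for some $e$. Operator types: unary $-:(\mathtt{int})\to\mathtt{int}$; unary $!:(T)\to\mathtt{int}$ for every type $T$; binary $+,-,*,/,\&\&,||,<,<=,>,>=:(\mathtt{int},\mathtt{int})\to\mathtt{int}$; binary $==,!=:(T,T)\to\mathtt{int}$ for every type $T$. Subtyping $\le$ is the reflexive closure of $\mathtt{void}*\le\mathtt{struct}\ s*$ for every struct $s$ defined in the program; $\max_\le\{T_1,T_2\}$ is the greater of two $\le$-comparable types. LC typing (relative to the program under consideration; $\Gamma$ a finite map from parameter names to types): (T-prg) if $\mathtt{Prg}$ is sane, $\mathtt{Prg}=\overline{SD}\,\overline{FD}$ and $\vdash FD\ \textsc{ok}$ for every $FD$ in $\overline{FD}$, then $\vdash\mathtt{Prg}\ \textsc{ok}$. (T-fun) if $x_1{:}T_1,\dots,x_k{:}T_k\vdash e:T'$ and $T'\le T_0$ then $\vdash T_0\,f(T_1x_1,\dots,T_kx_k)\{\mathtt{return}\ e;\}\ \textsc{ok}$. (T-int) $\Gamma\vdash n:\mathtt{int}$. (T-null) $\Gamma\vdash\mathtt{NULL}:\mathtt{void}*$.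 (T-par) if $x{:}T\in\Gamma$ then $\Gamma\vdash x:T$. (T-app) if $\mathtt{Prg}(f)=T_0\,f(T_1x_1,\dots,T_kx_k)\{\dots\}$, and $\Gamma\vdash e_i:T_i'$, $T_i'\le T_i$ for $i=1..k$ (exactly $k$ arguments), then $\Gamma\vdash f(e_1,\dots,e_k):T_0$. (T-member) if $\Gamma\vdash e_0:\mathtt{struct}\ s*$ and $\mathtt{Prg}(s)(m)=T\,m$ then $\Gamma\vdash e_0\texttt{->}m:T$. (T-assign) if additionally $\Gamma\vdash e_1:T_1$, $T_1\le T$, then $\Gamma\vdash e_0\texttt{->}m=e_1:T$. (T-cond) if $\Gamma\vdash e_j:T_j$ ($j=0,1,2$) and $T_3=\max_\le\{T_1,T_2\}$ then $\Gamma\vdash e_0?e_1:e_2:T_3$. (T-seq) if $\Gamma\vdash e_i:T_i$ for $i=1..n$ then $\Gamma\vdash(e_1,\dots,e_n):T_n$. (T-uop) if $\Gamma\vdash e_0:T_0$ and $\mathsf{uop}$ has type $(T_0)\to\mathtt{int}$ then $\Gamma\vdash\mathsf{uop}\,e_0:\mathtt{int}$. (T-bop) if $\Gamma\vdash e_1:T_1$, $\Gamma\vdash e_2:T_2$, $T_3=\max_\le\{T_1,T_2\}$ and $\mathsf{bop}$ has type $(T_3,T_3)\to\mathtt{int}$ then $\Gamma\vdash e_1\,\mathsf{bop}\,e_2:\mathtt{int}$. (T-malloc) if $s\in\mathrm{dom}(\overline{SD})$ then $\Gamma\vdash\mathtt{MALLOC}(\mathtt{struct}\ s):\mathtt{struct}\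 s*$. (T-mfree) if $\Gamma\vdash e_0:\mathtt{struct}\ s*$ then $\Gamma\vdash\mathtt{MFREE}(e_0):\mathtt{void}*$. **Colored LC (CLC).** A feature model $\Phi=(\mathcal F,\phi)$: $\mathcal F$ a finite set of features, $\phi$ a propositional formula over $\mathcal F$ (connectives $!,\&\&,||$, constants $0,1$). A product is $p\subseteq\mathcal F$; $p\models\psi$ means $\psi$ is true under the assignment giving 1 to features in $p$ and 0 to the others; $p$ is valid if $p\models\phi$. For formulas, $\theta\models\theta'$ means $\theta\Rightarrow\theta'$ is valid; $\psi_1\Rightarrow\psi_2$ abbreviates $!\psi_1||\psi_2$ and $\psi_1\Leftrightarrow\psi_2$ the conjunction of both implications. An SPL is a triple $(\Phi,\mathtt{Prg},\mathrm{AT})$ with $\mathtt{Prg}$ an LC program (the code base) and $\mathrm{AT}$ an annotation table assigning a propositional formula over $\mathcal F$ to each occurrence of an annotable fragment of $\mathtt{Prg}$; annotable fragments are: each struct definition, each member declaration $T\,m$, each function definition, each formal parameter declaration $T\,x$, each argument of a function call, and each element of a parenthesized sequence. Occurrences not explicitly annotated have annotation $1$. Abbreviations: $\mathrm{AT}(s)=\mathrm{AT}(\mathtt{Prg}(s))$ is the annotation of the definition of struct $s$, $\mathrm{AT}(f)=\mathrm{AT}(\mathtt{Prg}(f))$ that of function $f$; $\mathrm{AT}(\mathtt{int})=\mathrm{AT}(\mathtt{void}* )=1$, $\mathrm{AT}(\mathtt{struct}\ s* )=\mathrm{AT}(\mathtt{Prg}(s))$; for equal-length sequences, $\mathrm{AT}(\bar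 a)\odot\mathrm{AT}(\bar b)$ ($\odot\in\{\Rightarrow,\Leftrightarrow\}$) is the conjunction of $\mathrm{AT}(a_i)\odot\mathrm{AT}(b_i)$; $\exists(e_1,\dots,e_n)=\mathrm{AT}(e_1)||\cdots||\mathrm{AT}(e_n)$; $\mathtt{neverLast}(k,(e_1,\dots,e_n))=\,!\mathrm{AT}(e_k)||\mathrm{AT}(e_{k+1})||\cdots||\mathrm{AT}(e_n)$. An annotated type environment $\Delta$ maps parameter names to pairs written $x{:}T$ with $\psi$ ($T$ a type, $\psi$ a formula). Family-based typing of $(\Phi,\mathtt{Prg},\mathrm{AT})$: (FT-prg) if $\mathtt{Prg}$ is sane, $\mathrm{AT}(\mathtt{main})=1$, $\mathtt{Prg}=\overline{SD}\,\overline{FD}$, $\phi\,\&\&\,\mathrm{AT}(SD)\vdash SD\ \textsc{ok}$ for each $SD$ in $\overline{SD}$ and $\phi\,\&\&\,\mathrm{AT}(FD)\vdash FD\ \textsc{ok}$ for each $FD$ in $\overline{FD}$, then $\phi\vdash\mathtt{Prg}\ \textsc{ok}$. (FT-struct) if $\theta\models\mathrm{AT}(T_i\,m_i)\Rightarrow\mathrm{AT}(T_i)$ for all $i$, then $\theta\vdash\mathtt{struct}\ s\{T_1m_1;\dots;T_km_k;\}\ \textsc{ok}$. (FT-fun) if $\theta\models\mathrm{AT}(T_0)$, $\theta\models\mathrm{AT}(T_i\,x_i)\Rightarrow\mathrm{AT}(T_i)$ for all $i$, $\theta;\ x_1{:}T_1\text{ with }\mathrm{AT}(T_1x_1),\dots,x_k{:}T_k\text{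 with }\mathrm{AT}(T_kx_k)\vdash e:T'$ and $T'\le T_0$, then $\theta\vdash T_0\,f(T_1x_1,\dots,T_kx_k)\{\mathtt{return}\ e;\}\ \textsc{ok}$. (FT-int) $\theta;\Delta\vdash n:\mathtt{int}$. (FT-null) $\theta;\Delta\vdash\mathtt{NULL}:\mathtt{void}*$. (FT-par) if $x{:}T$ with $\psi$ is in $\Delta$ and $\theta\models\psi$ then $\theta;\Delta\vdash x:T$. (FT-app) if $\mathtt{Prg}(f)=T_0\,f(T_1x_1,\dots,T_kx_k)\{\dots\}$, $\theta\models\mathrm{AT}(\mathtt{Prg}(f))$, and for $i=1..k$ (exactly $k$ arguments) $\theta;\Delta\vdash e_i:T_i'$, $T_i'\le T_i$ and $\theta\models\mathrm{AT}(e_i)\Leftrightarrow\mathrm{AT}(T_ix_i)$, then $\theta;\Delta\vdash f(e_1,\dots,e_k):T_0$. (FT-member) if $\theta;\Delta\vdash e_0:\mathtt{struct}\ s*$, $\mathtt{Prg}(s)(m)=T\,m$ and $\theta\models\mathrm{AT}(T\,m)$ then $\theta;\Delta\vdash e_0\texttt{->}m:T$. (FT-assign) if additionally $\theta;\Delta\vdash e_1:T_1$ and $T_1\le T$ then $\theta;\Delta\vdash e_0\texttt{->}m=e_1:T$. (FT-cond), (FT-uop), (FT-bop), (FT-mfree): as T-cond, T-uop, T-bop, T-mfree with every judgment $\Gamma\vdash$ replaced by $\theta;\Delta\vdash$. (FT-seq) if $\theta\models\exists(e_1,\dots,e_n)$, $\theta\,\&\&\,\mathrm{AT}(e_i);\Delta\vdash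 e_i:T_i$ for all $i$, $T=T_n$, and $\theta\models\mathtt{neverLast}(i,(e_1,\dots,e_n))$ for every $i$ with $T_i\ne T$, then $\theta;\Delta\vdash(e_1,\dots,e_n):T$. (FT-malloc) if $s\in\mathrm{dom}(\overline{SD})$ and $\theta\models\mathrm{AT}(\mathtt{Prg}(s))$ then $\theta;\Delta\vdash\mathtt{MALLOC}(\mathtt{struct}\ s):\mathtt{struct}\ s*$. **Variant generation.** For a product $p$ and a sequence of annotable occurrences: $[\![\,]\!]_p$ is empty; $[\![a_1\dots a_n]\!]_p=\langle\!\langle a_1\rangle\!\rangle_p\,[\![a_2\dots a_n]\!]_p$ if $p\models\mathrm{AT}(a_1)$, and $=[\![a_2\dots a_n]\!]_p$ otherwise. $\langle\!\langle\mathtt{struct}\ s\{\overline{T\,m};\}\rangle\!\rangle_p=\mathtt{struct}\ s\{[\![\overline{T\,m}]\!]_p\}$; $\langle\!\langle T_0f(\overline{T\,x})\{\mathtt{return}\ e;\}\rangle\!\rangle_p=T_0f([\![\overline{T\,x}]\!]_p)\{\mathtt{return}\ \langle\!\langle e\rangle\!\rangle_p;\}$; $\langle\!\langle T\,m\rangle\!\rangle_p=T\,m$, $\langle\!\langle T\,x\rangle\!\rangle_p=T\,x$; $\langle\!\langle f(\bar e)\rangle\!\rangle_p=f([\![\bar e]\!]_p)$; $\langle\!\langle(\tilde e)\rangle\!\rangle_p=([\![\tilde e]\!]_p)$; on all other expression forms $\langle\!\langle\cdot\rangle\!\rangle_p$ acts homomorphically on immediate subexpressions ($n$, $\mathtt{NULL}$,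 $x$, $\mathtt{MALLOC}(\mathtt{struct}\ s)$ unchanged). The variant is $[\![\mathtt{Prg}]\!]_p=[\![\overline{SD}]\!]_p\,[\![\overline{FD}]\!]_p$ for $\mathtt{Prg}=\overline{SD}\,\overline{FD}$. *)

From Stdlib Require Import ZArith String List.
From mathcomp Require Import ssreflect ssrbool eqtype choice fintype.
Import ListNotations.
Set Implicit Arguments.
Unset Strict Implicit.

Definition sname := string.
Definition mname := string.
Definition fname := string.
Definition pname := string.

Definition main_name : fname := "main"%string.

Inductive typ : Type :=
| TInt
| TVoidPtr
| TStructPtr (s : sname).

Inductive uop : Type := UNeg | UNot.
Inductive bop : Type :=
| BAdd | BSub | BMul | BDiv | BAnd | BOr | BLt | BLe | BGt | BGe | BEq | BNe.

Definition uop_type (o : uop) (T : typ) : Prop :=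
  match o with UNeg => T = TInt | UNot => True end.
Definition bop_type (o : bop) (T : typ) : Prop :=
  match o with BEq | BNe => True | _ => T = TInt end.

(* Syntax, parametrised by the type A of annotations carried by the
   annotable fragments.  LC programs are [prog unit]; the code base of a
   CLC SPL together with its annotation table is a [prog (formula F)]. *)
Section Syntax.
Variable A : Type.

Inductive expr : Type :=
| ENum (n : Z)
| ENull
| EPar (x : pname)
| EApp (f : fname) (args : list (A * expr))
| EMem (e : expr) (m : mname)
| EAssign (e0 : expr) (m : mname) (e1 : expr)
| ECond (e0 e1 e2 : expr)
| ESeq (es : list (A * expr))
| EUop (o : uop) (e : expr)
| EBop (o : bop) (e1 e2 : expr)
| EMalloc (s : sname)
| EFree (e : expr).

Record sdef : Type := SDef {
  sd_ann : A;
  sd_name : sname;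
  sd_mems : list (A * (typ * mname)) }.

Record fdef : Type := FDef {
  fd_ann : A;
  fd_ret : typ;
  fd_name : fname;
  fd_params : list (A * (typ * pname));
  fd_body : expr }.

Record prog : Type := Prog {
  p_structs : list sdef;
  p_funs : list fdef }.

Definition find_struct (P : prog) (s : sname) : option sdef :=
  find (fun d => String.eqb (sd_name d) s) (p_structs P).
Definition find_fun (P : prog) (f : fname) : option fdef :=
  find (fun d => String.eqb (fd_name d) f) (p_funs P).
Definition find_mem (d : sdef) (m : mname) : option (A * (typ * mname)) :=
  find (fun md => String.eqb (snd (snd md)) m) (sd_mems d).

Definition struct_defined (P : prog) (s : sname) : Prop :=
  In s (map sd_name (p_structs P)).
Definition fun_defined (P : prog) (f : fname) : Prop :=
  In f (map fd_name (p_funs P)).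

Definition names_ok (P : prog) : Prop :=
  NoDup (map sd_name (p_structs P)) /\
  NoDup (map fd_name (p_funs P)) /\
  Forall (fun d => NoDup (map (fun md => snd (snd md)) (sd_mems d))) (p_structs P) /\
  Forall (fun d => NoDup (map (fun pd => snd (snd pd)) (fd_params d))) (p_funs P).

Definition typ_structs (T : typ) : list sname :=
  match T with TStructPtr s => [s] | _ => [] end.

Fixpoint expr_mallocs (e : expr) : list sname :=
  match e with
  | ENum _ | ENull | EPar _ => []
  | EApp _ args =>
      (fix go (l : list (A * expr)) : list sname :=
         match l with [] => [] | (_, e') :: l' => expr_mallocs e' ++ go l' end) args
  | ESeq es =>
      (fix go (l : list (A * expr)) : list sname :=
         match l with [] => [] | (_, e') :: l' => expr_mallocs e' ++ go l' end) es
  | EMem e0 _ => expr_mallocs e0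
  | EAssign e0 _ e1 => expr_mallocs e0 ++ expr_mallocs e1
  | ECond e0 e1 e2 => expr_mallocs e0 ++ expr_mallocs e1 ++ expr_mallocs e2
  | EUop _ e0 => expr_mallocs e0
  | EBop _ e1 e2 => expr_mallocs e1 ++ expr_mallocs e2
  | EMalloc s => [s]
  | EFree e0 => expr_mallocs e0
  end.

Fixpoint expr_calls (e : expr) : list fname :=
  match e with
  | ENum _ | ENull | EPar _ | EMalloc _ => []
  | EApp f args =>
      f :: (fix go (l : list (A * expr)) : list fname :=
         match l with [] => [] | (_, e') :: l' => expr_calls e' ++ go l' end) args
  | ESeq es =>
      (fix go (l : list (A * expr)) : list fname :=
         match l with [] => [] | (_, e') :: l' => expr_calls e' ++ go l' end) es
  | EMem e0 _ => expr_calls e0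
  | EAssign e0 _ e1 => expr_calls e0 ++ expr_calls e1
  | ECond e0 e1 e2 => expr_calls e0 ++ expr_calls e1 ++ expr_calls e2
  | EUop _ e0 => expr_calls e0
  | EBop _ e1 e2 => expr_calls e1 ++ expr_calls e2
  | EFree e0 => expr_calls e0
  end.

Definition sdef_structs (d : sdef) : list sname :=
  sd_name d :: flat_map (fun md => typ_structs (fst (snd md))) (sd_mems d).
Definition fdef_structs (d : fdef) : list sname :=
  typ_structs (fd_ret d) ++ flat_map (fun pd => typ_structs (fst (snd pd))) (fd_params d)
  ++ expr_mallocs (fd_body d).
Definition prog_structs (P : prog) : list sname :=
  flat_map sdef_structs (p_structs P) ++ flat_map fdef_structs (p_funs P).
Definition prog_calls (P : prog) : list fname :=
  flat_map (fun d => fd_name d :: expr_calls (fd_body d)) (p_funs P).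

Definition sane (P : prog) : Prop :=
  (forall s, In s (prog_structs P) -> struct_defined P s) /\
  (forall f, In f (prog_calls P) -> fun_defined P f) /\
  (exists d, find_fun P main_name = Some d /\ fd_ret d = TInt /\ fd_params d = []).

Definition subty (P : prog) (T1 T2 : typ) : Prop :=
  T1 = T2 \/ (T1 = TVoidPtr /\ exists s, T2 = TStructPtr s /\ struct_defined P s).

Definition tmax (P : prog) (T1 T2 T3 : typ) : Prop :=
  (subty P T1 T2 /\ T3 = T2) \/ (subty P T2 T1 /\ T3 = T1).

End Syntax.

Arguments ENum {A} n.
Arguments ENull {A}.
Arguments EPar {A} x.
Arguments EMalloc {A} s.

Definition lexpr := expr unit.
Definition lprog := prog unit.

Inductive lc_ty (P : lprog) (G : list (pname * typ)) : lexpr -> typ -> Prop :=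
| T_int n : lc_ty P G (ENum n) TInt
| T_null : lc_ty P G ENull TVoidPtr
| T_par x T : In (x, T) G -> lc_ty P G (EPar x) T
| T_app f d args Ts :
    find_fun P f = Some d ->
    Forall2 (fun a T' => lc_ty P G (snd a) T') args Ts ->
    Forall2 (fun T' pd => subty P T' (fst (snd pd))) Ts (fd_params d) ->
    lc_ty P G (EApp f args) (fd_ret d)
| T_member e0 s m sd a T m' :
    lc_ty P G e0 (TStructPtr s) ->
    find_struct P s = Some sd -> find_mem sd m = Some (a, (T, m')) ->
    lc_ty P G (EMem e0 m) T
| T_assign e0 s m sd a T m' e1 T1 :
    lc_ty P G e0 (TStructPtr s) ->
    find_struct P s = Some sd -> find_mem sd m = Some (a, (T, m')) ->
    lc_ty P G e1 T1 -> subty P T1 T ->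
    lc_ty P G (EAssign e0 m e1) T
| T_cond e0 e1 e2 T0 T1 T2 T3 :
    lc_ty P G e0 T0 -> lc_ty P G e1 T1 -> lc_ty P G e2 T2 ->
    tmax P T1 T2 T3 -> lc_ty P G (ECond e0 e1 e2) T3
| T_seq es Ts :
    Forall2 (fun a T => lc_ty P G (snd a) T) es Ts ->
    Ts <> [] ->
    lc_ty P G (ESeq es) (last Ts TInt)
| T_uop o e0 T0 :
    lc_ty P G e0 T0 -> uop_type o T0 -> lc_ty P G (EUop o e0) TInt
| T_bop o e1 e2 T1 T2 T3 :
    lc_ty P G e1 T1 -> lc_ty P G e2 T2 -> tmax P T1 T2 T3 -> bop_type o T3 ->
    lc_ty P G (EBop o e1 e2) TInt
| T_malloc s : struct_defined P s -> lc_ty P G (EMalloc s) (TStructPtr s)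
| T_mfree e0 s : lc_ty P G e0 (TStructPtr s) -> lc_ty P G (EFree e0) TVoidPtr.

Definition lc_fun_ok (P : lprog) (d : fdef unit) : Prop :=
  exists T', lc_ty P (map (fun pd => (snd (snd pd), fst (snd pd))) (fd_params d))
                   (fd_body d) T' /\ subty P T' (fd_ret d).

Definition lc_prog_ok (P : lprog) : Prop :=
  sane P /\ Forall (lc_fun_ok P) (p_funs P).

Section Formulas.
Variable F : finType.

Inductive formula : Type :=
| FVar (f : F)
| FNot (a : formula)
| FAnd (a b : formula)
| FOr (a b : formula)
| FFalse
| FTrue.

(* a product p ⊆ F, given by its characteristic function *)
Fixpoint feval (p : F -> bool) (a : formula) : bool :=
  match a with
  | FVar f => p f
  | FNot a => negb (feval p a)
  | FAnd a b => feval p a && feval p b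
  | FOr a b => feval p a || feval p b
  | FFalse => false
  | FTrue => true
  end.

Definition entails (a b : formula) : Prop :=
  forall p : F -> bool, feval p a = true -> feval p b = true.

Definition fimp (a b : formula) : formula := FOr (FNot a) b.
Definition fiff (a b : formula) : formula := FAnd (fimp a b) (fimp b a).
Definition big_or (l : list formula) : formula := fold_right FOr FFalse l.

Definition fexists (es : list (formula * expr formula)) : formula :=
  big_or (map fst es).
(* neverLast(k,(e1..en)) = !AT(e_k) || AT(e_{k+1}) || ... || AT(e_n)  (0-based k) *)
Definition never_last (k : nat) (es : list (formula * expr formula)) : formula :=
  FOr (FNot (nth k (map fst es) FTrue)) (big_or (map fst (skipn (S k) es))).

End Formulas.

Arguments FFalse {F}.
Arguments FTrue {F}.

Section FT.
Variable F : finType.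
Notation fm := (formula F).
Definition cexpr := expr fm.
Definition cprog := prog fm.

Definition at_typ (P : cprog) (T : typ) : fm :=
  match T with
  | TStructPtr s => match find_struct P s with Some d => sd_ann d | None => FTrue end
  | _ => FTrue
  end.

Inductive ft_ty (P : cprog) (D : list (pname * (typ * fm))) : fm -> cexpr -> typ -> Prop :=
| FT_int th n : ft_ty P D th (ENum n) TInt
| FT_null th : ft_ty P D th ENull TVoidPtr
| FT_par th x T psi : In (x, (T, psi)) D -> entails th psi -> ft_ty P D th (EPar x) T
| FT_app th f d args Ts :
    find_fun P f = Some d ->
    entails th (fd_ann d) ->
    Forall2 (fun a T' => ft_ty P D th (snd a) T') args Ts ->
    Forall2 (fun T' pd => subty P T' (fst (snd pd))) Ts (fd_params d) ->
    Forall2 (fun a pd => entails th (fiff (fst a) (fst pd))) args (fd_params d) ->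
    ft_ty P D th (EApp f args) (fd_ret d)
| FT_member th e0 s m sd a T m' :
    ft_ty P D th e0 (TStructPtr s) ->
    find_struct P s = Some sd -> find_mem sd m = Some (a, (T, m')) ->
    entails th a ->
    ft_ty P D th (EMem e0 m) T
| FT_assign th e0 s m sd a T m' e1 T1 :
    ft_ty P D th e0 (TStructPtr s) ->
    find_struct P s = Some sd -> find_mem sd m = Some (a, (T, m')) ->
    entails th a ->
    ft_ty P D th e1 T1 -> subty P T1 T ->
    ft_ty P D th (EAssign e0 m e1) T
| FT_cond th e0 e1 e2 T0 T1 T2 T3 :
    ft_ty P D th e0 T0 -> ft_ty P D th e1 T1 -> ft_ty P D th e2 T2 ->
    tmax P T1 T2 T3 -> ft_ty P D th (ECond e0 e1 e2) T3
| FT_seq th es Ts :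
    entails th (fexists es) ->
    Forall2 (fun a T => ft_ty P D (FAnd th (fst a)) (snd a) T) es Ts ->
    Ts <> [] ->
    (forall i, i < length Ts -> nth i Ts TInt <> last Ts TInt ->
               entails th (never_last i es)) ->
    ft_ty P D th (ESeq es) (last Ts TInt)
| FT_uop th o e0 T0 :
    ft_ty P D th e0 T0 -> uop_type o T0 -> ft_ty P D th (EUop o e0) TInt
| FT_bop th o e1 e2 T1 T2 T3 :
    ft_ty P D th e1 T1 -> ft_ty P D th e2 T2 -> tmax P T1 T2 T3 -> bop_type o T3 ->
    ft_ty P D th (EBop o e1 e2) TInt
| FT_malloc th s sd :
    find_struct P s = Some sd -> entails th (sd_ann sd) ->
    ft_ty P D th (EMalloc s) (TStructPtr s)
| FT_mfree th e0 s : ft_ty P D th e0 (TStructPtr s) -> ft_ty P D th (EFree e0) TVoidPtr.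

Definition ft_struct_ok (P : cprog) (th : fm) (d : sdef fm) : Prop :=
  Forall (fun md => entails th (fimp (fst md) (at_typ P (fst (snd md))))) (sd_mems d).

Definition ft_fun_ok (P : cprog) (th : fm) (d : fdef fm) : Prop :=
  entails th (at_typ P (fd_ret d)) /\
  Forall (fun pd => entails th (fimp (fst pd) (at_typ P (fst (snd pd))))) (fd_params d) /\
  exists T', ft_ty P (map (fun pd => (snd (snd pd), (fst (snd pd), fst pd))) (fd_params d))
                   th (fd_body d) T' /\ subty P T' (fd_ret d).

Definition ft_prog_ok (phi : fm) (P : cprog) : Prop :=
  sane P /\
  (exists d, find_fun P main_name = Some d /\ fd_ann d = FTrue) /\
  Forall (fun d => ft_struct_ok P (FAnd phi (sd_ann d)) d) (p_structs P) /\
  Forall (fun d => ft_fun_ok P (FAnd phi (fd_ann d)) d) (p_funs P).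

Fixpoint var_expr (p : F -> bool) (e : cexpr) : lexpr :=
  match e with
  | ENum n => ENum n
  | ENull => ENull
  | EPar x => EPar x
  | EApp f args =>
      EApp f ((fix go (l : list (fm * cexpr)) : list (unit * lexpr) :=
                 match l with
                 | [] => []
                 | (a, e') :: l' => if feval p a then (tt, var_expr p e') :: go l' else go l'
                 end) args)
  | ESeq es =>
      ESeq ((fix go (l : list (fm * cexpr)) : list (unit * lexpr) :=
               match l with
               | [] => []
               | (a, e') :: l' => if feval p a then (tt, var_expr p e') :: go l' else go l'
               end) es)
  | EMem e0 m => EMem (var_expr p e0) m
  | EAssign e0 m e1 => EAssign (var_expr p e0) m (var_expr p e1)
  | ECond e0 e1 e2 => ECond (var_expr p e0) (var_expr p e1) (var_expr p e2)
  | EUop o e0 => EUop o (var_expr p e0)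
  | EBop o e1 e2 => EBop o (var_expr p e1) (var_expr p e2)
  | EMalloc s => EMalloc s
  | EFree e0 => EFree (var_expr p e0)
  end.

Definition var_decls {X : Type} (p : F -> bool) (l : list (fm * X)) : list (unit * X) :=
  map (fun ax => (tt, snd ax)) (filter (fun ax => feval p (fst ax)) l).

Definition var_struct (p : F -> bool) (d : sdef fm) : sdef unit :=
  SDef tt (sd_name d) (var_decls p (sd_mems d)).

Definition var_fun (p : F -> bool) (d : fdef fm) : fdef unit :=
  FDef tt (fd_ret d) (fd_name d) (var_decls p (fd_params d)) (var_expr p (fd_body d)).

Definition variant (p : F -> bool) (P : cprog) : lprog :=
  Prog (map (var_struct p) (filter (fun d => feval p (sd_ann d)) (p_structs P)))
       (map (var_fun p) (filter (fun d => feval p (fd_ann d)) (p_funs P))).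

End FT.

(* Project a family-based typing derivation for a presence condition satisfied
   by [p] onto the variant: by induction on the derivation, the projected
   expression has the same type in the variant, and every struct type occurring
   in it survives (its definition is annotated with a condition [p] satisfies).
   The annotation premises are what make the projection coherent: the
   equivalences [AT(e_i) <=> AT(T_i x_i)] keep the surviving arguments aligned
   with the surviving parameters; [exists] makes a projected sequence nonempty
   and [neverLast] forces its last surviving element to carry the type of the
   whole sequence; the implications [AT(T m) => AT(T)] ensure that declared
   types mention surviving structs only. Sanity of the variant follows because a
   well-typed LC expression only mentions defined structs and functions. *)

From Stdlib Require Import String List PeanoNat.
From mathcomp Require Import ssreflect fintype.
Import ListNotations.
Set Implicit Arguments.
Unset Strict Implicit.

Lemma find_map_filter (X Y : Type) (g : X -> Y) (q k : X -> bool) (k' : Y -> bool) l x :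
  (forall x, k' (g x) = k x) -> find k l = Some x -> q x = true ->
  find k' (map g (filter q l)) = Some (g x).
Proof.
move=> Hk; elim: l => [|a l IH] //=.
case Ea: (k a) => /=.
- by move=> [<-] ->; rewrite /= Hk Ea.
- by move=> Hl Hq; case: (q a) => /=; rewrite ?Hk ?Ea; apply: IH.
Qed.

Lemma find_some_of_In (X : Type) (k : X -> bool) l x :
  In x l -> k x = true -> exists y, find k l = Some y.
Proof.
move=> Hx Hk; case E: (find k l) => [y|]; first by exists y.
by rewrite (find_none _ _ E x Hx) in Hk.
Qed.

Lemma NoDup_map_filter (X Y : Type) (f : X -> Y) (q : X -> bool) l :
  NoDup (map f l) -> NoDup (map f (filter q l)).
Proof.
elim: l => [|a l IH] //= /NoDup_cons_iff [Hna Hl].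
case: (q a) => /=; last exact: IH.
apply/NoDup_cons_iff; split; last exact: IH.
by move=> /in_map_iff [b [Hb /filter_In [Hbl _]]]; apply: Hna; rewrite -Hb; apply: in_map.
Qed.

Lemma incl_flat_map (X Y : Type) (g : X -> list Y) l m :
  (forall x, In x l -> incl (g x) m) -> incl (flat_map g l) m.
Proof. by move=> H y /in_flat_map [x [Hx Hy]]; apply: H Hx _ Hy. Qed.

(* Transparent, so that they can be used under the structural [fix] of the
   inductions on typing derivations below. *)
Fixpoint Forall2_mono (X Y : Type) (R S : X -> Y -> Prop) (f : forall x y, R x y -> S x y)
  l1 l2 (h : Forall2 R l1 l2) : Forall2 S l1 l2 :=
  match h with
  | Forall2_nil => Forall2_nil _
  | Forall2_cons _ _ _ _ r h' => Forall2_cons _ _ (f _ _ r) (Forall2_mono f h')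
  end.

Fixpoint Forall2_Forall_l (X Y : Type) (R : X -> Y -> Prop) (Q : X -> Prop)
  (f : forall x y, R x y -> Q x) l1 l2 (h : Forall2 R l1 l2) : Forall Q l1 :=
  match h with
  | Forall2_nil => Forall_nil _
  | Forall2_cons _ _ _ _ r h' => Forall_cons _ (f _ _ r) (Forall2_Forall_l f h')
  end.

Lemma Forall2_map_l (X X' Y : Type) (R : X' -> Y -> Prop) (f : X -> X') l1 l2 :
  Forall2 (fun x y => R (f x) y) l1 l2 -> Forall2 R (map f l1) l2.
Proof. by elim=> [|x y l1' l2' Hxy _ IH] /=; constructor. Qed.

Lemma Forall2_last (X Y : Type) (R : X -> Y -> Prop) l1 l2 x0 y0 :
  Forall2 R l1 l2 -> l2 <> [] -> R (last l1 x0) (last l2 y0).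
Proof.
elim=> [|x y l1' l2' Hxy Hl IH] // _.
by case: Hl IH => [|x' y' l1'' l2'' _ _] //= IH; apply: IH.
Qed.

Lemma last_cons_neq_nil (X : Type) (x d : X) l : l <> [] -> last (x :: l) d = last l d.
Proof. by case: l. Qed.

Fixpoint filter_by (X Y : Type) (q : X -> bool) (l1 : list X) (l2 : list Y) : list Y :=
  match l1, l2 with
  | x :: l1', y :: l2' => if q x then y :: filter_by q l1' l2' else filter_by q l1' l2'
  | _, _ => []
  end.

Lemma filter_by_cons (X Y : Type) (q : X -> bool) x l1 (y : Y) l2 :
  filter_by q (x :: l1) (y :: l2) = if q x then y :: filter_by q l1 l2 else filter_by q l1 l2.
Proof. by []. Qed.

Lemma Forall2_filter_by (X Y : Type) (R : X -> Y -> Prop) q l1 l2 :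
  Forall2 (fun x y => q x = true -> R x y) l1 l2 -> Forall2 R (filter q l1) (filter_by q l1 l2).
Proof. by elim=> [|x y l1' l2' Hxy _ IH] //=; case: (q x) Hxy => // H; constructor; auto. Qed.

Lemma filter_by_neq_nil (X Y : Type) (q : X -> bool) l1 (l2 : list Y) :
  length l1 = length l2 -> List.existsb q l1 = true -> filter_by q l1 l2 <> [].
Proof. by elim: l1 l2 => [|x l1 IH] [|y l2] //= [Hlen]; case: (q x) => //= /IH; apply. Qed.

Section Occurrences.
Variable A : Type.

Lemma expr_mallocs_app f (l : list (A * expr A)) :
  expr_mallocs (EApp f l) = flat_map (fun a => expr_mallocs (snd a)) l.
Proof. by elim: l => [|[a e] l IH] //=; rewrite -IH. Qed.

Lemma expr_mallocs_seq (l : list (A * expr A)) :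
  expr_mallocs (ESeq l) = flat_map (fun a => expr_mallocs (snd a)) l.
Proof. by elim: l => [|[a e] l IH] //=; rewrite -IH. Qed.

Lemma expr_calls_app f (l : list (A * expr A)) :
  expr_calls (EApp f l) = f :: flat_map (fun a => expr_calls (snd a)) l.
Proof. by elim: l => [|[a e] l IH] //=; case: IH => <-. Qed.

Lemma expr_calls_seq (l : list (A * expr A)) :
  expr_calls (ESeq l) = flat_map (fun a => expr_calls (snd a)) l.
Proof. by elim: l => [|[a e] l IH] //=; rewrite -IH. Qed.

End Occurrences.

Section DefinedNames.
Variables (P : lprog) (G : list (pname * typ)).
Notation struct_names := (map (@sd_name unit) (p_structs P)).
Notation fun_names := (map (@fd_name unit) (p_funs P)).

Definition mentions_defined (e : lexpr) : Prop :=
  incl (expr_mallocs e) struct_names /\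
  incl (expr_calls e) fun_names.

Lemma mentions_defined_list (l : list (unit * lexpr)) :
  Forall (fun a => mentions_defined (snd a)) l ->
  incl (flat_map (fun a => expr_mallocs (snd a)) l) struct_names /\
  incl (flat_map (fun a => expr_calls (snd a)) l) fun_names.
Proof.
by move=> /Forall_forall Hl; split; apply: incl_flat_map => a /Hl [].
Qed.

Lemma lc_ty_mentions_defined e T : lc_ty P G e T -> mentions_defined e.
Proof.
move: e T; fix IH 3 => e T H.
have IHl l Ts (Hl : Forall2 (fun a T => lc_ty P G (snd a) T) l Ts) :=
  mentions_defined_list (Forall2_Forall_l (fun a T r => IH _ _ r) Hl).
rewrite /mentions_defined.
destruct H as [n| |x T Hx|f d args Ts Hf HA HS|e0 s m sd a T m' H0 Hs Hm
  |e0 s m sd a T m' e1 T1 H0 Hs Hm H1 Hsub|e0 e1 e2 T0 T1 T2 T3 H0 H1 H2 Hmax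
  |es Ts HF Hne|o e0 T0 H0 Hu|o e1 e2 T1 T2 T3 H1 H2 Hmax Hb|s Hs|e0 s H0];
  rewrite ?expr_mallocs_app ?expr_calls_app ?expr_mallocs_seq ?expr_calls_seq /=.
1-3: by split; apply: incl_nil_l.
- have [Hms Hcs] := IHl _ _ HA; split => //; apply: incl_cons => //.
  by have [Hd /String.eqb_eq <-] := find_some _ _ Hf; apply: in_map.
- exact: IH H0.
- have [Hm0 Hc0] := IH _ _ H0; have [Hm1 Hc1] := IH _ _ H1.
  by split; apply: incl_app.
- have [Hm0 Hc0] := IH _ _ H0; have [Hm1 Hc1] := IH _ _ H1; have [Hm2 Hc2] := IH _ _ H2.
  by split; repeat apply: incl_app.
- exact: IHl HF.
- exact: IH H0.
- have [Hm1 Hc1] := IH _ _ H1; have [Hm2 Hc2] := IH _ _ H2.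
  by split; apply: incl_app.
- by split; [apply: incl_cons; [exact: Hs|apply: incl_nil_l]|apply: incl_nil_l].
- exact: IH H0.
Qed.
End DefinedNames.

Definition typ_eq_dec (T1 T2 : typ) : {T1 = T2} + {T1 <> T2}.
Proof. decide equality; exact: string_dec. Defined.

Lemma feval_fexists (F : finType) (p : F -> bool) (es : list (formula F * cexpr F)) :
  feval p (fexists es) = List.existsb (fun a => feval p (fst a)) es.
Proof. by elim: es => //= a es <-. Qed.

Lemma feval_fiff (F : finType) (p : F -> bool) th a b :
  entails th (fiff a b) -> feval p th = true -> feval p a = feval p b.
Proof. by move=> H /H /=; case: (feval p a); case: (feval p b). Qed.

(* The last kept element has no kept successor, so its [never_last] premise can
   only hold because its type already is the type of the whole sequence. *)
Lemma last_filter_by_never_last (F : finType) (p : F -> bool) (es : list (formula F * cexpr F)) Ts :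
  length es = length Ts ->
  (forall i, i < length Ts -> nth i Ts TInt <> last Ts TInt ->
             feval p (never_last i es) = true) ->
  filter_by (fun a => feval p (fst a)) es Ts <> [] ->
  last (filter_by (fun a => feval p (fst a)) es Ts) TInt = last Ts TInt.
Proof.
elim: es Ts => [|[a e] es IH] [|T Ts] // [Hlen] Hnl; rewrite filter_by_cons.
case Hrest: (filter_by _ es Ts) => [|T' Ts'].
- case Ha: (feval p a) => // _ /=.
  case: Ts Hlen Hnl Hrest => [|T2 Ts2] // Hlen Hnl Hrest.
  case: (typ_eq_dec T (last (T2 :: Ts2) TInt)) => // Hneq.
  have := Hnl 0 (Nat.lt_0_succ _) Hneq.
  rewrite /never_last /= Ha -/(fexists es) feval_fexists => Hex.
  by case: (filter_by_neq_nil Hlen Hex Hrest).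
- have HTs : Ts <> [] by move=> HTs; move: Hrest; rewrite HTs; case: (es).
  rewrite last_cons_neq_nil // -(IH Ts) ?Hrest //=.
  + by case: (feval p a).
  + move=> i Hi Hneq; apply: (Hnl (S i)); first exact: (proj1 (Nat.succ_lt_mono _ _) Hi).
    by rewrite last_cons_neq_nil.
Qed.

Section Variant.
Variables (F : finType) (P : cprog F) (p : F -> bool).
Notation V := (variant p P).

Lemma find_struct_variant s sd :
  find_struct P s = Some sd -> feval p (sd_ann sd) = true ->
  find_struct V s = Some (var_struct p sd).
Proof. exact: find_map_filter. Qed.

Lemma find_fun_variant f d :
  find_fun P f = Some d -> feval p (fd_ann d) = true ->
  find_fun V f = Some (var_fun p d).
Proof. exact: find_map_filter. Qed.

Lemma find_mem_variant sd m a T m' :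
  find_mem sd m = Some (a, (T, m')) -> feval p a = true ->
  find_mem (var_struct p sd) m = Some (tt, (T, m')).
Proof.
move=> Hm Ha; rewrite /find_mem /var_decls /=.
change (tt, (T, m')) with ((fun ax : formula F * (typ * mname) => (tt, snd ax)) (a, (T, m'))).
exact: find_map_filter Hm Ha.
Qed.

Lemma struct_defined_variant s sd :
  find_struct P s = Some sd -> feval p (sd_ann sd) = true -> struct_defined V s.
Proof.
move=> Hs Ha; have [Hin /String.eqb_eq <-] := find_some _ _ (find_struct_variant Hs Ha).
exact: in_map.
Qed.

Definition kept_type (T : typ) : Prop :=
  match T with
  | TStructPtr s => exists sd, find_struct P s = Some sd /\ feval p (sd_ann sd) = true
  | _ => True
  end.

Lemma incl_typ_structs_variant T :
  kept_type T -> incl (typ_structs T) (map (@sd_name unit) (p_structs V)).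
Proof.
case: T => [| |s] /=; try by move=> _; apply: incl_nil_l.
by move=> [sd [Hs Ha]]; apply: incl_cons; [exact: struct_defined_variant Hs Ha|apply: incl_nil_l].
Qed.

Lemma subty_variant T1 T2 : subty P T1 T2 -> kept_type T2 -> subty V T1 T2.
Proof.
case=> [-> _|[-> [s [-> _]]] [sd [Hs Ha]]]; first by left.
by right; split=> //; exists s; split=> //; exact: struct_defined_variant Hs Ha.
Qed.

Lemma tmax_variant T1 T2 T3 :
  tmax P T1 T2 T3 -> kept_type T1 -> kept_type T2 -> tmax V T1 T2 T3 /\ kept_type T3.
Proof.
case=> [[Hsub ->]|[Hsub ->]] H1 H2; split=> //.
- by left; split=> //; exact: subty_variant.
- by right; split=> //; exact: subty_variant.
Qed.

Definition var_elems (l : list (formula F * cexpr F)) : list (unit * lexpr) :=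
  map (fun a => (tt, var_expr p (snd a))) (filter (fun a => feval p (fst a)) l).

Lemma var_expr_app f l : var_expr p (EApp f l) = EApp f (var_elems l).
Proof.
rewrite /var_elems; elim: l => [|[a e] l IH] //=.
by case: IH => ->; case: (feval p a).
Qed.

Lemma var_expr_seq l : var_expr p (ESeq l) = ESeq (var_elems l).
Proof.
rewrite /var_elems; elim: l => [|[a e] l IH] //=.
by case: IH => ->; case: (feval p a).
Qed.

Lemma in_var_decls (X : Type) (l : list (formula F * X)) y :
  In y (var_decls p l) -> exists x, In x l /\ feval p (fst x) = true /\ y = (tt, snd x).
Proof. by move=> /in_map_iff [x [<- /filter_In [Hx Hp]]]; exists x. Qed.

Lemma names_ok_variant : names_ok P -> names_ok V.
Proof.
move=> [Hs [Hf [/Forall_forall Hm /Forall_forall Hp]]]; split; [|split; [|split]] => /=.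
- by rewrite map_map; apply: NoDup_map_filter.
- by rewrite map_map; apply: NoDup_map_filter.
- apply/Forall_forall => _ /in_map_iff [sd [<- /filter_In [Hsd _]]].
  by rewrite /= /var_decls map_map; apply/NoDup_map_filter/Hm.
- apply/Forall_forall => _ /in_map_iff [d [<- /filter_In [Hd _]]].
  by rewrite /= /var_decls map_map; apply/NoDup_map_filter/Hp.
Qed.

End Variant.

Section FamilyTyped.
Variables (F : finType) (phi : formula F) (P : cprog F) (p : F -> bool).
Hypotheses (Hok : ft_prog_ok phi P) (Hphi : feval p phi = true).
Notation V := (variant p P).

(* [at_typ P T] is [FTrue] when the struct of [T] is undefined; sanity of [P]
   excludes that case for every type occurring in [P]. *)
Lemma kept_type_of_at_typ T :
  incl (typ_structs T) (prog_structs P) ->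
  feval p (at_typ P T) = true -> kept_type P p T.
Proof.
case: T => [| |s] //= Hocc.
have [[Hdef _] _] := Hok.
have /in_map_iff [sd [Hn Hsd]] := Hdef s (Hocc s (in_eq s [])).
have [sd' Hs] : exists sd', find_struct P s = Some sd'.
  by apply: find_some_of_In Hsd _; apply/String.eqb_eq.
by rewrite Hs => Hann; exists sd'.
Qed.

Lemma kept_member_type sd md :
  In sd (p_structs P) -> feval p (sd_ann sd) = true ->
  In md (sd_mems sd) -> feval p (fst md) = true -> kept_type P p (fst (snd md)).
Proof.
move=> Hsd Hann Hmd Hma; apply: kept_type_of_at_typ.
- move=> s Hs; apply/in_or_app; left; apply/in_flat_map; exists sd; split=> //.
  by right; apply/in_flat_map; exists md.
- have [_ [_ [/Forall_forall Hst _]]] := Hok.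
  move: (Hst _ Hsd) => /Forall_forall /(_ _ Hmd) /(_ p).
  by rewrite /= Hphi Hann Hma; apply.
Qed.

Lemma kept_ret_type d :
  In d (p_funs P) -> feval p (fd_ann d) = true -> kept_type P p (fd_ret d).
Proof.
move=> Hd Hann; apply: kept_type_of_at_typ.
- move=> s Hs; apply/in_or_app; right; apply/in_flat_map; exists d; split=> //.
  by apply/in_or_app; left.
- have [_ [_ [_ /Forall_forall /(_ _ Hd) [Hret _]]]] := Hok.
  by apply: Hret; rewrite /= Hphi Hann.
Qed.

Lemma kept_param_type d :
  In d (p_funs P) -> feval p (fd_ann d) = true ->
  forall pd, In pd (fd_params d) -> feval p (fst pd) = true -> kept_type P p (fst (snd pd)).
Proof.
move=> Hd Hann pd Hpd Hpa; apply: kept_type_of_at_typ.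
- move=> s Hs; apply/in_or_app; right; apply/in_flat_map; exists d; split=> //.
  apply/in_or_app; right; apply/in_or_app; left; apply/in_flat_map.
  by exists pd.
- have [_ [_ [_ /Forall_forall /(_ _ Hd) [_ [/Forall_forall /(_ _ Hpd) Hpar _]]]]] := Hok.
  by move: (Hpar p); rewrite /= Hphi Hann Hpa; apply.
Qed.

Lemma member_access_variant th s sd m a T m' :
  kept_type P p (TStructPtr s) -> find_struct P s = Some sd ->
  find_mem sd m = Some (a, (T, m')) -> entails th a -> feval p th = true ->
  find_struct V s = Some (var_struct p sd) /\
  find_mem (var_struct p sd) m = Some (tt, (T, m')) /\ kept_type P p T.
Proof.
move=> [sd' [Hs' Hann]] Hs Hm Ha Hth.
move: Hann; rewrite Hs in Hs'; case: Hs' => <- Hann.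
have Hap := Ha p Hth.
split; first exact: find_struct_variant Hs Hann.
split; first exact: find_mem_variant Hm Hap.
have [Hsd _] := find_some _ _ Hs; have [Hmd _] := find_some _ _ Hm.
exact: kept_member_type Hsd Hann Hmd Hap.
Qed.

Section Soundness.
Variables (D : list (pname * (typ * formula F))) (G : list (pname * typ)).
Hypothesis HD : forall x T psi, In (x, (T, psi)) D -> feval p psi = true ->
  In (x, T) G /\ kept_type P p T.

Lemma var_args_typed th args Ts (params : list (formula F * (typ * pname))) :
  Forall2 (fun a T => lc_ty V G (var_expr p (snd a)) T) args Ts ->
  Forall2 (fun T pd => subty P T (fst (snd pd))) Ts params ->
  Forall2 (fun a pd => entails th (fiff (fst a) (fst pd))) args params ->
  feval p th = true ->
  (forall pd, In pd params -> feval p (fst pd) = true -> kept_type P p (fst (snd pd))) ->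
  exists Ts', Forall2 (fun a T => lc_ty V G (snd a) T) (var_elems p args) Ts' /\
              Forall2 (fun T pd => subty V T (fst (snd pd))) Ts' (var_decls p params).
Proof.
move=> HA; elim: HA params => [|a T args' Ts' Ha _ IH] params HS HI Hth Hkept.
- by inversion HS; exists []; split; constructor.
- inversion HS as [|T0 pd Ts0 params' HS1 HS2]; subst.
  inversion HI as [|a0 pd0 args0 params0 HI1 HI2]; subst.
  have [Ts'' [HA' HS']] := IH _ HS2 HI2 Hth (fun pd' H => Hkept pd' (or_intror H)).
  rewrite /var_elems /var_decls /= -(feval_fiff HI1 Hth).
  case Hpa: (feval p (fst a)) => //=; last by exists Ts''.
  exists (T :: Ts''); split; constructor => //.
  apply: subty_variant HS1 (Hkept _ (in_eq _ _) _).
  by rewrite -(feval_fiff HI1 Hth).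
Qed.

Lemma var_seq_typed th es Ts :
  Forall2 (fun a T => feval p (fst a) = true ->
    lc_ty V G (var_expr p (snd a)) T /\ kept_type P p T) es Ts ->
  entails th (fexists es) -> feval p th = true ->
  (forall i, i < length Ts -> nth i Ts TInt <> last Ts TInt -> entails th (never_last i es)) ->
  lc_ty V G (ESeq (var_elems p es)) (last Ts TInt) /\ kept_type P p (last Ts TInt).
Proof.
move=> HF Hex Hth Hnl.
have Hlen := Forall2_length HF.
have Hne : filter_by (fun a => feval p (fst a)) es Ts <> [].
  by apply: filter_by_neq_nil Hlen _; rewrite -feval_fexists; exact: Hex p Hth.
have HF' := Forall2_filter_by HF.
rewrite -(last_filter_by_never_last Hlen (fun i Hi Hn => Hnl i Hi Hn p Hth) Hne).
split; last exact: proj2 (Forall2_last (FTrue, ENull) TInt HF' Hne).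
apply: T_seq Hne; apply: Forall2_map_l.
by apply: Forall2_mono HF' => a T [].
Qed.

Lemma ft_ty_variant th e T :
  ft_ty P D th e T -> feval p th = true ->
  lc_ty V G (var_expr p e) T /\ kept_type P p T.
Proof.
move: th e T; fix IH 4 => th e T H Hth.
destruct H as [th n|th|th x T psi Hin Hps|th f d args Ts Hf Ha HA HS HI
  |th e0 s m sd a T m' H0 Hs Hm Ha|th e0 s m sd a T m' e1 T1 H0 Hs Hm Ha H1 Hsub
  |th e0 e1 e2 T0 T1 T2 T3 H0 H1 H2 Hmax|th es Ts Hex HF Hne Hnl
  |th o e0 T0 H0 Hu|th o e1 e2 T1 T2 T3 H1 H2 Hmax Hb|th s sd Hs Ha|th e0 s H0].
- by split; first constructor.
- by split; first constructor.
- by have [HG Hk] := HD Hin (Hps p Hth); split; first constructor.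
- have [Hd _] := find_some _ _ Hf; have Hda := Ha p Hth.
  have [Ts' [HA' HS']] := var_args_typed
    (Forall2_mono (fun a T r => proj1 (IH _ _ _ r Hth)) HA) HS HI Hth (kept_param_type Hd Hda).
  rewrite var_expr_app; split; last exact: kept_ret_type Hd Hda.
  exact: T_app (find_fun_variant Hf Hda) HA' HS'.
- have [H0' Hk] := IH _ _ _ H0 Hth.
  have [Hs' [Hm' HT]] := member_access_variant Hk Hs Hm Ha Hth.
  by split; first exact: T_member H0' Hs' Hm'.
- have [H0' Hk] := IH _ _ _ H0 Hth; have [H1' Hk1] := IH _ _ _ H1 Hth.
  have [Hs' [Hm' HT]] := member_access_variant Hk Hs Hm Ha Hth.
  by split; first exact: T_assign H0' Hs' Hm' H1' (subty_variant Hsub HT).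
- have [H0' _] := IH _ _ _ H0 Hth.
  have [H1' Hk1] := IH _ _ _ H1 Hth; have [H2' Hk2] := IH _ _ _ H2 Hth.
  have [Hmax' HT] := tmax_variant Hmax Hk1 Hk2.
  by split; first exact: T_cond H0' H1' H2' Hmax'.
- have Hth_and a : feval p a = true -> feval p (FAnd th a) = true by rewrite /= Hth => ->.
  rewrite var_expr_seq; apply: var_seq_typed Hex Hth Hnl.
  by apply: Forall2_mono HF => a T' Ha' Hpa; apply: IH Ha' (Hth_and _ Hpa).
- by have [H0' _] := IH _ _ _ H0 Hth; split; first exact: T_uop H0' Hu.
- have [H1' Hk1] := IH _ _ _ H1 Hth; have [H2' Hk2] := IH _ _ _ H2 Hth.
  have [Hmax' _] := tmax_variant Hmax Hk1 Hk2.
  by split; first exact: T_bop H1' H2' Hmax' Hb.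
- have Hk : kept_type P p (TStructPtr s) by exists sd; split; last exact: Ha p Hth.
  by split; first (constructor; case: Hk => sd' [Hs' Ha']; exact: struct_defined_variant Hs' Ha').
- by have [H0' _] := IH _ _ _ H0 Hth; split; first exact: T_mfree H0'.
Qed.

End Soundness.

Lemma lc_fun_ok_variant d :
  In d (p_funs P) -> feval p (fd_ann d) = true -> lc_fun_ok V (var_fun p d).
Proof.
move=> Hd Hann.
have [_ [_ [_ /Forall_forall /(_ _ Hd) [_ [_ [T [HT Hsub]]]]]]] := Hok.
have Hth : feval p (FAnd phi (fd_ann d)) = true by rewrite /= Hphi Hann.
set G := map (fun pd => (snd (snd pd), fst (snd pd))) (var_decls p (fd_params d)).
have HD x T' psi :
    In (x, (T', psi)) (map (fun pd => (snd (snd pd), (fst (snd pd), fst pd))) (fd_params d)) ->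
    feval p psi = true -> In (x, T') G /\ kept_type P p T'.
  move=> /in_map_iff [pd [[<- <- <-] Hpd]] Hpa.
  split; last exact (kept_param_type Hd Hann Hpd Hpa).
  apply/in_map_iff; exists (tt, snd pd); split=> //.
  by apply/in_map_iff; exists pd; split=> //; apply/filter_In.
have [Hbody _] := ft_ty_variant HD HT Hth.
by exists T; split; last exact: subty_variant Hsub (kept_ret_type Hd Hann).
Qed.

Lemma sane_variant : sane V.
Proof.
have [[_ [_ [m [Hm [Hret Hpar]]]]] [[m' [Hm' Hmann]] _]] := Hok.
split; [|split].
- move=> s; rewrite /prog_structs => /in_app_iff [].
  + move=> /in_flat_map [_ [/in_map_iff [sd [<- /filter_In [Hsd Hann]]] [<-|Hs]]].
    * by apply/in_map/in_map/filter_In.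
    * move: Hs => /in_flat_map [_ [/in_var_decls [md [Hmd [Hma ->]]] Hs]].
      exact: incl_typ_structs_variant (kept_member_type Hsd Hann Hmd Hma) _ Hs.
  + move=> /in_flat_map [_ [/in_map_iff [d [<- /filter_In [Hd Hann]]]]].
    move=> /in_app_iff [Hs|/in_app_iff [Hs|Hs]].
    * exact: incl_typ_structs_variant (kept_ret_type Hd Hann) _ Hs.
    * move: Hs => /in_flat_map [_ [/in_var_decls [pd [Hpd [Hpa ->]]] Hs]].
      exact: incl_typ_structs_variant (kept_param_type Hd Hann Hpd Hpa) _ Hs.
    * have [T [HT _]] := lc_fun_ok_variant Hd Hann.
      exact: proj1 (lc_ty_mentions_defined HT) _ Hs.
- move=> f /in_flat_map [_ [/in_map_iff [d [<- /filter_In [Hd Hann]]] [<-|Hf]]].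
  + by apply/in_map/in_map/filter_In.
  + have [T [HT _]] := lc_fun_ok_variant Hd Hann.
    exact: proj2 (lc_ty_mentions_defined HT) _ Hf.
- rewrite Hm' in Hm; case: Hm Hret Hpar => <- Hret Hpar.
  exists (var_fun p m'); split; first by apply: find_fun_variant Hm' _; rewrite Hmann.
  by rewrite /= Hpar.
Qed.

End FamilyTyped.

Theorem theorem4 (F : finType) (phi : formula F) (P : cprog F) (p : F -> bool) :
  names_ok P ->
  feval p phi = true ->
  ft_prog_ok phi P ->
  names_ok (variant p P) /\ lc_prog_ok (variant p P).
Proof.
move=> Hnames Hphi Hok; split; first exact: names_ok_variant.
split; first exact: sane_variant Hok Hphi.
apply/Forall_forall => _ /in_map_iff [d [<- /filter_In [Hd Hann]]].
exact (lc_fun_ok_variant Hok Hphi Hd Hann).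
Qed.
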